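(* Let $\mathcal{A}$ be a family of nonempty subsets of $\mathbb{R}^n$ closed under linear combinations, and let $\mathcal{F}:\mathcal{A}\to\mathbb{R}_{\geqslant0}$ be increasing under set inclusion and sub-homogeneous of degree $1/\alpha$ for some $\alpha>0$. Let $K,L\in\mathcal{A}$ with $\mathcal{F}(K)\mathcal{F}(L)>0$ satisfy, for all $\lambda\in(0,1)$, \[ \mathcal{F}\bigl((1-\lambda)K+\lambda L\bigr)\geqslant C\bigl((1-\lambda)\mathcal{F}(K)^\alpha+\lambda\mathcal{F}(L)^\alpha\bigr)^{1/\alpha}\qquad(\ast) \] for some constant $C>0$. Then for any $p\geqslant1$ and all $\lambda\in(0,1)$, \[ \mathcal{F}\bigl((1-\lambda)\cdot K+_p\lambda\cdot L\bigr)\geqslant C\bigl((1-\lambda)\mathcal{F}(K)^{p\alpha}+\lambda\mathcal{F}(L)^{p\alpha}\bigr)^{1/(p\alpha)} \] whenever $(1-\lambda)\cdot K+_p\lambda\cdot L\in\mathcal{A}$. Moreover, if equality holds for some $\lambda\in(0,1)$ and $p>1$, then $K,L$ satisfy $(\ast)$ with equality for some $\bar\lambda\in(0,1)$; if in addition $\mathcal{F}$ is strictly increasing and $K,L$ are compact, then $\mathrm{conv}\,K$ and $\mathrm{conv}\,L$ contain the origin and are dilatates of each other; and if furthermore $\mathcal{F}$ is strictly sub-homogeneous of degree $1/\alpha$, then $\mathrm{conv}\,K=\mathrm{conv}\,L$.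
   Context: A functional $\mathcal{F}:\mathcal{A}\to\mathbb{R}_{\geqslant0}$ on a family closed under dilatations is sub-homogeneous of degree $1/\alpha$ ($\alpha\neq0$) if $\mathcal{F}(rK)\leqslant r^{1/\alpha}\mathcal{F}(K)$ for all $r\geqslant1$, and strictly sub-homogeneous if the inequality is strict whenever $\mathcal{F}(K)>0$ and $r>1$. Strictly increasing means $A\subsetneq B$ implies $\mathcal{F}(A)<\mathcal{F}(B)$. A dilatate of $A$ is a set $\lambda A$ with $\lambda\geqslant0$; $\mathrm{conv}$ denotes convex hull. For $p>1$, $q$ is the Hölder conjugate ($1/p+1/q=1$); for nonempty $K,L$, $K+_pL=\{(1-\mu)^{1/q}x+\mu^{1/q}y: x\in K, y\in L, \mu\in[0,1]\}$ and $\lambda\cdot K=\lambda^{1/p}K$; for $p=1$ the coefficients $(1-\mu)^{1/q},\mu^{1/q}$ are interpreted as $1$, so $+_1$ is Minkowski addition. *)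

From HB Require Import structures.
From mathcomp Require Import all_boot all_order all_algebra.
From mathcomp Require Import all_classical all_reals all_analysis.
Set Implicit Arguments. Unset Strict Implicit. Unset Printing Implicit Defensive.
Import Order.TTheory GRing.Theory Num.Theory.
Import numFieldNormedType.Exports.
Local Open Scope classical_set_scope.
Local Open Scope ring_scope.

Section defs.
Variables (R : realType) (n : nat).
Local Notation V := 'rV[R]_n.

Definition dilate (r : R) (K : set V) : set V := [set r *: x | x in K].

Definition msum (K L : set V) : set V := [set x + y | x in K & y in L].

Definition mcomb (a b : R) (K L : set V) : set V := msum (dilate a K) (dilate b L).

Definition psum (p : R) (K L : set V) : set V :=
  if p == 1 then msum K L
  else [set z | exists x y mu, [/\ K x, L y, 0 <= mu <= 1 &
          z = (1 - mu) `^ (1 - p^-1) *: x + mu `^ (1 - p^-1) *: y]].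

Definition pscale (p lambda : R) (K : set V) : set V := dilate (lambda `^ p^-1) K.

Definition convhull (K : set V) : set V :=
  \bigcap_(C in [set C : set V | convex_set (C : set (convex_lmodType V)) /\ K `<=` C]) C.

Definition increasing_on (A : set (set V)) (F : set V -> R) :=
  forall K L, A K -> A L -> K `<=` L -> F K <= F L.

Definition strictly_increasing_on (A : set (set V)) (F : set V -> R) :=
  forall K L, A K -> A L -> K `<=` L -> K != L -> F K < F L.

Definition subhomogeneous_on (A : set (set V)) (F : set V -> R) (alpha : R) :=
  forall K r, A K -> 1 <= r -> F (dilate r K) <= r `^ alpha^-1 * F K.

Definition strictly_subhomogeneous_on (A : set (set V)) (F : set V -> R) (alpha : R) :=
  subhomogeneous_on A F alpha /\
  forall K r, A K -> 0 < F K -> 1 < r -> F (dilate r K) < r `^ alpha^-1 * F K.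

End defs.

(* Write x = F(K)^alpha, y = F(L)^alpha and, for p > 1, r = 1/p.  For every
   mu in [0,1] the L_p combination contains a K + b L with
   a = (1-mu)^(1-r) (1-lambda)^r and b = mu^(1-r) lambda^r.  By Hoelder's
   inequality a + b <= 1, and for the right mu, a x + b y is exactly
   ((1-lambda) x^p + lambda y^p)^(1/p).  Sub-homogeneity rescales a K + b L to
   the normalized Minkowski combination, where the hypothesis applies, and
   monotonicity passes the bound on to the L_p combination.

   In the equality case every step of this chain is tight.  If F is strictly
   increasing, the L_p combination then equals a K + b L, so in each direction u
   the weight mu maximizes nu |-> (1-nu)^(1-r) (1-lambda)^r h_K(u)
   + nu^(1-r) lambda^r h_L(u); by the equality case of Hoelder's inequality the
   support functions satisfy h_K >= 0 and h_K y = h_L x.  The convex hull of a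
   compact set is compact (Caratheodory) and hence determined by its support
   function, which gives the statements on conv K and conv L.  Strict
   sub-homogeneity finally forces a + b = 1, hence mu = lambda and x = y. *)

From HB Require Import structures.
From mathcomp Require Import all_boot all_order all_algebra.
From mathcomp Require Import all_classical all_reals all_analysis.
From mathcomp Require Import ring lra.
Import Order.TTheory GRing.Theory Num.Theory.
Import numFieldNormedType.Exports.
Local Open Scope classical_set_scope.
Local Open Scope ring_scope.

Set Implicit Arguments.
Unset Strict Implicit.
Unset Printing Implicit Defensive.

(** * Weighted AM-GM and the two-term Hoelder inequality *)

Section RealInequalities.
Variable R : realType.
Implicit Types a b r s p P Q nu : R.

Lemma powRK a p : 0 <= a -> p != 0 -> (a `^ p) `^ p^-1 = a.
Proof. by move=> a0 p0; rewrite -powRrM divff // powRr1. Qed.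

Lemma powRVK a p : 0 <= a -> p != 0 -> (a `^ p^-1) `^ p = a.
Proof. by move=> a0 p0; rewrite -powRrM mulVf // powRr1. Qed.

Lemma powR_lt1 a s : 0 <= a < 1 -> 0 < s -> a `^ s < 1.
Proof.
move=> /andP[a0 a1] s0.
by have := gt0_ltr_powR s0 _ _ a1; rewrite !nnegrE powR1; apply.
Qed.

Lemma powR_gt_base a s : 0 < a < 1 -> 0 < s < 1 -> a < a `^ s.
Proof.
move=> /andP[a0 a1] /andP[s0 s1].
have apos : a \in Num.pos by rewrite posrE.
rewrite -(lnK apos) -expRM ltr_expR.
have : ln a < 0 by rewrite ln_lt0 // a0 a1.
nra.
Qed.

Lemma expR_gt_tangent (m z : R) : z != m -> expR m * (1 + (z - m)) < expR z.
Proof.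
move=> zm; have -> : expR z = expR m * expR (z - m) by rewrite -expRD addrC subrK.
rewrite ltr_pM2l ?expR_gt0 //.
by rewrite expR_gt1Dx // subr_eq0.
Qed.

Lemma amgm_lt r a b : 0 < r < 1 -> 0 <= a -> 0 <= b -> a != b ->
  a `^ r * b `^ (1 - r) < r * a + (1 - r) * b.
Proof.
move=> /andP[r0 r1] a0 b0 ab.
have r1' : 0 < 1 - r by rewrite subr_gt0.
have [a_eq0|a_neq0] := eqVneq a 0.
  rewrite a_eq0 powR0 ?gt_eqF // mul0r mulr0 add0r mulr_gt0 //.
  by rewrite lt_def b0 andbT eq_sym -a_eq0.
have [b_eq0|b_neq0] := eqVneq b 0.
  rewrite b_eq0 powR0 ?gt_eqF // mulr0 mulr0 addr0 mulr_gt0 //.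
  by rewrite lt_def a_neq0.
have apos : a \in Num.pos by rewrite posrE lt_def a_neq0.
have bpos : b \in Num.pos by rewrite posrE lt_def b_neq0.
rewrite -(lnK apos) -(lnK bpos) -!expRM -expRD.
set A := ln a; set B := ln b; set m := A * r + B * (1 - r).
have AB : A != B by apply: contra ab => /eqP AB; rewrite -(lnK apos) -(lnK bpos) -/A AB.
have Am : A != m.
  rewrite -subr_eq0 (_ : A - m = (1 - r) * (A - B)); last by rewrite /m; ring.
  by rewrite mulf_neq0 ?(gt_eqF r1') ?subr_eq0.
have Bm : B != m.
  rewrite -subr_eq0 (_ : B - m = r * (B - A)); last by rewrite /m; ring.
  by rewrite mulf_neq0 ?(gt_eqF r0) // subr_eq0 eq_sym.
have tA : r * (expR m * (1 + (A - m))) < r * expR A.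
  by rewrite ltr_pM2l // expR_gt_tangent.
have tB : (1 - r) * (expR m * (1 + (B - m))) < (1 - r) * expR B.
  by rewrite ltr_pM2l // expR_gt_tangent.
have <- : r * (expR m * (1 + (A - m))) + (1 - r) * (expR m * (1 + (B - m))) = expR m.
  by rewrite /m; ring.
exact: ltrD tA tB.
Qed.

Lemma amgm_le r a b : 0 < r < 1 -> 0 <= a -> 0 <= b ->
  a `^ r * b `^ (1 - r) <= r * a + (1 - r) * b.
Proof.
move=> r01 a0 b0; have [<-|ab] := eqVneq a b; last exact/ltW/amgm_lt.
rewrite -powRD; last by rewrite addrC subrK oner_eq0.
by rewrite addrC subrK powRr1 // -mulrDl addrC subrK mul1r.
Qed.

Lemma powR_ratio_mul p X T : p != 0 -> 0 < X -> 0 < T ->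
  (X `^ p / T) `^ (1 - p^-1) * X = X `^ p / T * T `^ p^-1.
Proof.
move=> p0 X0 T0.
rewrite -(lnK (X0 : X \in Num.pos)) -(lnK (T0 : T \in Num.pos)).
rewrite -!expRM -!expRN -!expRD -expRM -expRD; congr expR; by field.
Qed.

(* the point (al, be) lies beyond the segment from (1, 0) to (0, 1), and the linear
   form (P, Q) takes there a value at least its values at (1, 0) and (0, 1) *)
Lemma arc_argmax_sign (al be P Q : R) : 0 < al < 1 -> 0 < be < 1 -> 1 < al + be ->
  P <= al * P + be * Q -> Q <= al * P + be * Q -> P = 0 /\ Q = 0 \/ 0 < P /\ 0 < Q.
Proof.
move=> /andP[al0 al1] /andP[be0 be1] ab1 hP hQ.
have M0 : 0 <= al * P + be * Q by nra.
have P0 : 0 <= P by nra.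
have Q0 : 0 <= Q by nra.
have [P_eq0|P_neq0] := eqVneq P 0.
  by left; split=> //; apply/le_anti; rewrite Q0 andbT; move: hQ; rewrite P_eq0; nra.
right; split; first by rewrite lt_def P_neq0.
by rewrite lt_def Q0 andbT; apply/eqP=> Q_eq0; move: hP; rewrite Q_eq0; nra.
Qed.

End RealInequalities.

Section TwoTermHoelder.
Variable R : realType.
Implicit Types p P Q nu mu : R.

Definition pcomb p P Q nu := (1 - nu) `^ (1 - p^-1) * P + nu `^ (1 - p^-1) * Q.

Definition pweight p P Q := Q `^ p / (P `^ p + Q `^ p).

Lemma pweight_itv p P Q : 0 < P -> 0 < Q -> 0 < pweight p P Q < 1.
Proof.
move=> P0 Q0; have [Pp Qp] := (powR_gt0 p P0, powR_gt0 p Q0).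
by rewrite divr_gt0 ?addr_gt0 //= ltr_pdivrMr ?addr_gt0 // mul1r ltrDr.
Qed.

Lemma pcomb_pweight p P Q : 1 < p -> 0 < P -> 0 < Q ->
  pcomb p P Q (pweight p P Q) = (P `^ p + Q `^ p) `^ p^-1.
Proof.
move=> p1 P0 Q0; have p0 : p != 0 by rewrite gt_eqF // (lt_trans ltr01).
rewrite /pcomb /pweight; set T := P `^ p + Q `^ p.
have T0 : 0 < T by rewrite addr_gt0 ?powR_gt0.
have -> : 1 - Q `^ p / T = P `^ p / T by apply/eqP; rewrite subr_eq -mulrDl -/T divff // gt_eqF.
by rewrite !powR_ratio_mul // -mulrDl -mulrDl -/T divff ?mul1r // gt_eqF.
Qed.

Lemma pcomb_lt p P Q nu : 1 < p -> 0 < P -> 0 < Q -> 0 <= nu <= 1 ->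
  nu != pweight p P Q -> pcomb p P Q nu < (P `^ p + Q `^ p) `^ p^-1.
Proof.
move=> p1 P0 Q0 /andP[nu0 nu1] nu_neq.
have p0 : 0 < p by rewrite (lt_trans ltr01).
have r01 : 0 < p^-1 < 1 by rewrite invr_gt0 p0 invf_lt1.
rewrite /pweight in nu_neq *; set T := P `^ p + Q `^ p in nu_neq *.
have T0 : 0 < T by rewrite addr_gt0 ?powR_gt0.
have Tr0 : 0 < T `^ p^-1 by rewrite powR_gt0.
have amplitude X : 0 <= X -> X = T `^ p^-1 * (X `^ p / T) `^ p^-1.
  move=> X0; rewrite -powRM ?divr_ge0 ?powR_ge0 ?ltW // mulrCA divff ?gt_eqF //.
  by rewrite mulr1 powRK ?gt_eqF.
set u := P `^ p / T; set w := Q `^ p / T in nu_neq *.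
have uw : u + w = 1 by rewrite -mulrDl -/T divff // gt_eqF.
have u_neq : u != 1 - nu.
  by apply: contra nu_neq => /eqP u_eq; apply/eqP; rewrite -(subKr 1 nu) -u_eq -uw addrC addKr.
have u0 : 0 <= u by rewrite divr_ge0 ?powR_ge0 ?ltW.
have w0 : 0 <= w by rewrite divr_ge0 ?powR_ge0 ?ltW.
have nu1' : 0 <= 1 - nu by rewrite subr_ge0.
have h1 := amgm_lt r01 u0 nu1' u_neq; have h2 := amgm_le r01 w0 nu0.
rewrite /pcomb {1}(amplitude P (ltW P0)) {1}(amplitude Q (ltW Q0)) -/u -/w.
rewrite mulrCA [nu `^ _ * _]mulrCA -mulrDr -[X in _ < X]mulr1 ltr_pM2l //.
rewrite [X in X + _]mulrC [X in _ + X]mulrC.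
apply: (lt_le_trans (ltr_leD h1 h2)).
by rewrite addrACA -!mulrDr uw subrK !mulr1 addrC subrK.
Qed.

Lemma pcomb_le p P Q nu : 1 < p -> 0 < P -> 0 < Q -> 0 <= nu <= 1 ->
  pcomb p P Q nu <= (P `^ p + Q `^ p) `^ p^-1.
Proof.
move=> p1 P0 Q0 nu01; have [->|nu_neq] := eqVneq nu (pweight p P Q).
  by rewrite pcomb_pweight.
exact/ltW/pcomb_lt.
Qed.

Lemma pcomb0 p P Q : p != 1 -> pcomb p P Q 0 = P.
Proof.
move=> p1; rewrite /pcomb subr0 powR1 powR0 ?mul1r ?mul0r ?addr0 //.
by rewrite subr_eq0 eq_sym invr_eq1.
Qed.

Lemma pcomb1 p P Q : p != 1 -> pcomb p P Q 1 = Q.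
Proof.
move=> p1; rewrite /pcomb subrr powR1 powR0 ?mul1r ?mul0r ?add0r //.
by rewrite subr_eq0 eq_sym invr_eq1.
Qed.

Lemma pcomb_argmax p P Q mu : 1 < p -> 0 < mu < 1 ->
  (forall nu, 0 <= nu <= 1 -> pcomb p P Q nu <= pcomb p P Q mu) ->
  P = 0 /\ Q = 0 \/ [/\ 0 < P, 0 < Q & mu = pweight p P Q].
Proof.
move=> p1 mu01 mu_max; have p_neq1 : p != 1 by rewrite gt_eqF.
have p0 : 0 < p := lt_trans ltr01 p1.
have s01 : 0 < 1 - p^-1 < 1 by rewrite subr_gt0 invf_lt1 // p1 gtrBl invr_gt0.
have itvW (x : R) : 0 < x < 1 -> 0 <= x <= 1 by case/andP=> x0 x1; rewrite !ltW.
have [s0 _] := andP s01.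
have [mu0 mu1] := andP mu01.
have mu01' : 0 < 1 - mu < 1 by rewrite subr_gt0 gtrBl mu0 mu1.
have al01 : 0 < (1 - mu) `^ (1 - p^-1) < 1.
  by rewrite powR_gt0 ?subr_gt0 // powR_lt1 // subr_ge0 (ltW mu1) gtrBl.
have be01 : 0 < mu `^ (1 - p^-1) < 1 by rewrite powR_gt0 // powR_lt1 // (ltW mu0) mu1.
have ab1 : 1 < (1 - mu) `^ (1 - p^-1) + mu `^ (1 - p^-1).
  by have := powR_gt_base mu01' s01; have := powR_gt_base mu01 s01; lra.
have hP := mu_max 0 ltac:(by rewrite lexx ler01); rewrite pcomb0 // in hP.
have hQ := mu_max 1 ltac:(by rewrite lexx ler01); rewrite pcomb1 // in hQ.
have [[P0 Q0]|[P0 Q0]] := arc_argmax_sign al01 be01 ab1 hP hQ; [by left | right].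
split=> //; apply/eqP/contraT => /(pcomb_lt p1 P0 Q0 (itvW _ mu01)) lt_mu.
have := mu_max _ (itvW _ (pweight_itv p P0 Q0)); rewrite pcomb_pweight //.
by rewrite leNgt lt_mu.
Qed.

Lemma pweight_inj p P Q P' Q' : 0 < p -> 0 < P -> 0 < Q -> 0 < P' -> 0 < Q' ->
  pweight p P Q = pweight p P' Q' -> P * Q' = Q * P'.
Proof.
move=> p0 P0 Q0 P'0 Q'0; rewrite /pweight => /eqP.
have T0 : P `^ p + Q `^ p != 0 by rewrite gt_eqF // addr_gt0 ?powR_gt0.
have T'0 : P' `^ p + Q' `^ p != 0 by rewrite gt_eqF // addr_gt0 ?powR_gt0.
rewrite eqr_div // => /eqP e.
move: (ltW P0) (ltW Q0) (ltW P'0) (ltW Q'0) => P0' Q0' P'0' Q'0'.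
have : (Q' * P) `^ p = (Q * P') `^ p by rewrite !powRM //; lra.
move/(powR_injective p0); rewrite !nnegrE !mulr_ge0 // => /(_ isT isT) <-.
exact: mulrC.
Qed.

End TwoTermHoelder.

(** * Convex hulls and support functions in R^n *)

Section Dot.
Variables (R : realType) (n : nat).
Local Notation V := 'rV[R]_n.
Implicit Types u x y : V.

Definition dot u x : R := \sum_(i < n) u 0 i * x 0 i.

Lemma dotC u x : dot u x = dot x u.
Proof. by apply: eq_bigr => i _; rewrite mulrC. Qed.

Lemma dotD u x y : dot u (x + y) = dot u x + dot u y.
Proof. by rewrite /dot -big_split; apply: eq_bigr => i _; rewrite mxE mulrDr. Qed.

Lemma dotZ u a x : dot u (a *: x) = a * dot u x.
Proof. by rewrite /dot mulr_sumr; apply: eq_bigr => i _; rewrite mxE mulrCA. Qed.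

Lemma dotB u x y : dot u (x - y) = dot u x - dot u y.
Proof. by rewrite -scaleN1r dotD dotZ mulN1r. Qed.

Lemma dot0 u : dot u 0 = 0.
Proof. by rewrite -(scale0r 0) dotZ mul0r. Qed.

Lemma dotDl u x y : dot (x + y) u = dot x u + dot y u.
Proof. by rewrite dotC dotD !(dotC u). Qed.

Lemma dotZl u a x : dot (a *: x) u = a * dot x u.
Proof. by rewrite dotC dotZ dotC. Qed.

Lemma dot_self_ge0 u : 0 <= dot u u.
Proof. by apply: sumr_ge0 => i _; rewrite -expr2 sqr_ge0. Qed.

Lemma dot_self_gt0 u : u != 0 -> 0 < dot u u.
Proof.
move=> u0; rewrite lt_def dot_self_ge0 andbT; apply: contra u0.
rewrite psumr_eq0 => [/allP u_eq0|i _]; last by rewrite -expr2 sqr_ge0.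
apply/eqP/rowP => i; rewrite mxE.
by have /u_eq0 := mem_index_enum i; rewrite -expr2 sqrf_eq0 => /eqP.
Qed.

Lemma continuous_dot (T : topologicalType) (f g : T -> V) :
  continuous f -> continuous g -> continuous (fun z => dot (f z) (g z)).
Proof.
move=> cf cg; suff sum_cont r : continuous (fun z => \sum_(i <- r) f z 0 i * g z 0 i).
  exact: sum_cont.
have coord (h : T -> V) (i : 'I_n) : continuous h -> continuous (fun z => h z 0 i).
  by move=> ch z; exact: (continuous_comp (ch z) (@coord_continuous R 1 n 0 i (h z))).
elim: r => [|i r IH].
  by under eq_fun do rewrite big_nil; exact: cst_continuous.
under eq_fun do rewrite big_cons.
move=> z; apply: (continuousD (f := fun z => f z 0 i * g z 0 i)); last exact: IH.
by apply: continuousM; exact: coord.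
Qed.

Lemma dot_continuous u : continuous (dot u).
Proof. by apply: continuous_dot => z; [exact: cst_continuous | exact: cvg_id]. Qed.

Lemma dot_selfDZ u x (t : R) :
  dot (u + t *: x) (u + t *: x) = dot u u + 2 * t * dot u x + t ^+ 2 * dot x x.
Proof. by rewrite dotDl !dotD !dotZl !dotZ [dot x u]dotC; ring. Qed.

End Dot.

Section ConvexHull.
Variables (R : realType) (n : nat).
Local Notation V := 'rV[R]_n.
Implicit Types S C : set V.

Lemma convex_setP C : convex_set (C : set (convex_lmodType V)) <->
  (forall x y t, C x -> C y -> 0 <= t <= 1 -> C (t *: x + (1 - t) *: y)).
Proof.
split=> [cC x y t Cx Cy /andP[t0 t1]|cC x y l].
  by have := cC x y (Itv01 t0 t1); rewrite !inE => /(_ Cx Cy).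
rewrite !inE => Cx Cy.
by have := cC x y l%:num Cx Cy; rewrite ge0 le1; apply.
Qed.

Lemma subset_convhull S : S `<=` convhull S.
Proof. by move=> x Sx C [_]; apply. Qed.

Lemma convhull_sub S C :
  (forall x y t, C x -> C y -> 0 <= t <= 1 -> C (t *: x + (1 - t) *: y)) ->
  S `<=` C -> convhull S `<=` C.
Proof. by move=> cC SC x; apply; split=> //; apply/convex_setP. Qed.

Lemma convhull_segment S x y t : convhull S x -> convhull S y -> 0 <= t <= 1 ->
  convhull S (t *: x + (1 - t) *: y).
Proof.
move=> hx hy t01 C [cC SC]; apply: (convex_setP C).1 t01 => //.
  exact: hx.
exact: hy.
Qed.

End ConvexHull.

Definition ord_cons (X : Type) m (a : X) (f : 'I_m -> X) : 'I_m.+1 -> X :=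
  fun i => if unlift ord0 i is Some j then f j else a.

Lemma ord_cons0 (X : Type) m (a : X) (f : 'I_m -> X) : ord_cons a f ord0 = a.
Proof. by rewrite /ord_cons unlift_none. Qed.

Lemma ord_cons_lift (X : Type) m (a : X) (f : 'I_m -> X) j :
  ord_cons a f (lift ord0 j) = f j.
Proof. by rewrite /ord_cons liftK. Qed.

Section Caratheodory.
Variables (R : realType) (n : nat).
Local Notation V := 'rV[R]_n.
Implicit Types S : set V.

Definition convex_comb S m : set V :=
  [set x | exists (t : 'I_m -> R) (k : 'I_m -> V),
    [/\ forall i, 0 <= t i, \sum_i t i = 1, forall i, S (k i) &
        x = \sum_i t i *: k i]].

Definition comb2 (p : R * (V * V)) : V := (1 - p.1) *: p.2.1 + p.1 *: p.2.2.

Lemma comb2_continuous : continuous comb2.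
Proof.
move=> p; have c1 : {for p, continuous (fun q : R * (V * V) => q.1)} by exact: cvg_fst.
have c21 : {for p, continuous (fun q : R * (V * V) => q.2.1)}.
  by apply: continuous_comp; [exact: cvg_snd | exact: cvg_fst].
have c22 : {for p, continuous (fun q : R * (V * V) => q.2.2)}.
  by apply: continuous_comp; [exact: cvg_snd | exact: cvg_snd].
apply: (continuousD (f := fun q : R * (V * V) => (1 - q.1) *: q.2.1)
                   (g := fun q => q.1 *: q.2.2)); apply: continuousZ => //.
by apply: continuousB => //; exact: cst_continuous.
Qed.

Lemma convex_comb0 S : convex_comb S 0 = set0.
Proof.
apply/seteqP; split=> // x [t [k [_ t1 _ _]]].
by move: t1; rewrite big_ord0 => /eqP; rewrite eq_sym oner_eq0.
Qed.

Lemma convex_comb1 S : convex_comb S 1 = S.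
Proof.
apply/seteqP; split=> [x [t [k [_ t1 kS ->]]]|x Sx].
  by move: t1; rewrite !big_ord1 => ->; rewrite scale1r.
by exists (fun=> 1), (fun=> x); rewrite !big_ord1 scale1r.
Qed.

Lemma sub_convex_comb S m : S `<=` convex_comb S m.+1.
Proof.
move=> s Ss; exists (ord_cons 1 (fun=> 0)), (fun=> s); split=> //.
- by move=> i; rewrite /ord_cons; case: unlift.
- by rewrite big_ord_recl ord_cons0 big1 ?addr0 // => i _; rewrite ord_cons_lift.
- rewrite big_ord_recl ord_cons0 scale1r big1 ?addr0 // => i _.
  by rewrite ord_cons_lift scale0r.
Qed.

Lemma convex_combS S m :
  convex_comb S m.+2 = comb2 @` (`[0, 1] `*` (convex_comb S m.+1 `*` S)).
Proof.
apply/seteqP; split=> [x [t [k [t0 t1 kS ->]]]|].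
  rewrite big_ord_recl; set a := t ord0.
  have rest1 : \sum_(i < m.+1) t (lift ord0 i) = 1 - a.
    by rewrite -t1 [in RHS]big_ord_recl -/a addrAC subrr add0r.
  have a1 : a <= 1 by rewrite -subr_ge0 -rest1 sumr_ge0.
  have a01 : `[0, 1]%classic a by rewrite /= in_itv /= t0 a1.
  have [a_eq1|a_neq1] := eqVneq a 1.
    exists (a, (k ord0, k ord0)).
      by split=> //=; split; [exact: sub_convex_comb | exact: kS].
    rewrite /comb2 /= a_eq1 subrr scale0r add0r scale1r big1 ?addr0 // => i _.
    move: rest1; rewrite a_eq1 subrr => /eqP; rewrite psumr_eq0 // => /allP t_eq0.
    by rewrite (eqP (t_eq0 i (mem_index_enum i))) scale0r.
  have a_neq1' : 1 - a != 0 by rewrite subr_eq0 eq_sym.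
  exists (a, (\sum_(i < m.+1) (t (lift ord0 i) / (1 - a)) *: k (lift ord0 i), k ord0)).
    split=> //; split=> //=.
    exists (fun i => t (lift ord0 i) / (1 - a)), (fun i => k (lift ord0 i)); split=> //.
    - by move=> i; rewrite divr_ge0 // subr_ge0.
    - by rewrite -mulr_suml rest1 divff.
  rewrite /comb2 /= addrC scaler_sumr; congr (_ + _); apply: eq_bigr => i _.
  by rewrite scalerA mulrCA divff // mulr1.
move=> _ [[a [c k]] [/= /andP[a0 a1] [[t [k' [t0 t1 kS ->]]] Sk]] <-].
exists (ord_cons a (fun i => (1 - a) * t i)), (ord_cons k k'); split.
- by move=> i; rewrite /ord_cons; case: unlift => // j; rewrite mulr_ge0 // subr_ge0.
- rewrite big_ord_recl ord_cons0; under eq_bigr do rewrite ord_cons_lift.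
  by rewrite -mulr_sumr t1 mulr1 addrC subrK.
- by move=> i; rewrite /ord_cons; case: unlift.
- rewrite [RHS]big_ord_recl !ord_cons0 /comb2 /= addrC scaler_sumr; congr (_ + _).
  by apply: eq_bigr => i _; rewrite !ord_cons_lift scalerA.
Qed.

Lemma compact_convex_comb S m : compact S -> compact (convex_comb S m).
Proof.
move=> cS; case: m => [|m]; first by rewrite convex_comb0; exact: compact0.
elim: m => [|m IH]; first by rewrite convex_comb1.
rewrite convex_combS; apply: continuous_compact.
  by apply: continuous_subspaceT => x; exact: comb2_continuous.
by apply: compact_setX; [exact: segment_compact | exact: compact_setX].
Qed.

Lemma convex_comb_sub_convhull S m : convex_comb S m `<=` convhull S.
Proof.
case: m => [|m]; first by rewrite convex_comb0.
elim: m => [|m IH]; first by rewrite convex_comb1; exact: subset_convhull.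
rewrite convex_combS => _ [[a [c k]] [/= a01 [/IH c_in Sk]] <-].
by rewrite /comb2 /= addrC; apply: convhull_segment => //; exact: subset_convhull.
Qed.

Lemma convex_comb_widen S m : convex_comb S m `<=` convex_comb S m.+1.
Proof.
case: m => [|m]; first by rewrite convex_comb0.
move=> x [t [k [t0 t1 kS ->]]].
exists (ord_cons 0 t), (ord_cons (k ord0) k); split.
- by move=> i; rewrite /ord_cons; case: unlift.
- by rewrite big_ord_recl ord_cons0 add0r; under eq_bigr do rewrite ord_cons_lift.
- by move=> i; rewrite /ord_cons; case: unlift.
- rewrite [RHS]big_ord_recl ord_cons0 scale0r add0r.
  by under [RHS]eq_bigr do rewrite !ord_cons_lift.
Qed.

Lemma convex_comb_mono S m m' : (m <= m')%N -> convex_comb S m `<=` convex_comb S m'.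
Proof.
elim: m' => [|m' IH]; first by rewrite leqn0 => /eqP ->.
rewrite leq_eqVlt ltnS => /predU1P[-> //|/IH mm'] x /mm'.
exact: convex_comb_widen.
Qed.

Lemma convex_comb_segment S m1 m2 x y a :
  convex_comb S m1 x -> convex_comb S m2 y -> 0 <= a <= 1 ->
  convex_comb S (m1 + m2) (a *: x + (1 - a) *: y).
Proof.
move=> [t [k [t0 t1 kS ->]]] [t' [k' [t0' t1' kS' ->]]] /andP[a0 a1].
have sl (j : 'I_m1) : fintype.split (lshift m2 j) = inl j := unsplitK (inl j).
have sr (j : 'I_m2) : fintype.split (rshift m1 j) = inr j := unsplitK (inr j).
exists (fun i => match fintype.split i with inl j => a * t j | inr j => (1 - a) * t' j end).
exists (fun i => match fintype.split i with inl j => k j | inr j => k' j end).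
split.
- by move=> i; case: (fintype.split i) => j; rewrite mulr_ge0 // subr_ge0.
- rewrite big_split_ord /=; under eq_bigr do rewrite sl.
  under [X in _ + X]eq_bigr do rewrite sr.
  by rewrite -!mulr_sumr t1 t1' !mulr1 addrC subrK.
- by move=> i; case: (fintype.split i).
- rewrite [RHS]big_split_ord /= !scaler_sumr; congr (_ + _); apply: eq_bigr => i _.
    by rewrite sl scalerA.
  by rewrite sr scalerA.
Qed.

Lemma affine_dependence m (k : 'I_m -> V) : (n.+1 < m)%N ->
  exists c : 'I_m -> R, [/\ \sum_i c i = 0, \sum_i c i *: k i = 0 & exists i, 0 < c i].
Proof.
move=> hm; pose A : 'M[R]_(m, n + 1) :=
  \matrix_(i, j) match fintype.split j with inl j' => k i 0 j' | inr _ => 1 end.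
have [c c_neq0 cA] : exists2 c : 'rV_m, c != 0 & c *m A = 0.
  have kerA : kermx A != 0.
    rewrite -mxrank_eq0 mxrank_ker subn_eq0 -ltnNge.
    by apply: leq_ltn_trans (rank_leq_col A) _; rewrite addn1.
  have [i ki] : exists i, row i (kermx A) != 0.
    apply: contrapT => no_row; move/negP: kerA; apply; apply/eqP/row_matrixP => i.
    by rewrite row0; apply/eqP; apply: contrapT => /negP ri; apply: no_row; exists i.
  by exists (row i (kermx A)) => //; apply/sub_kermxP; exact: row_sub.
have sl (j : 'I_n) : fintype.split (lshift 1 j) = inl j := unsplitK (inl j).
have sr (j : 'I_1) : fintype.split (rshift n j) = inr j := unsplitK (inr j).
have c_sum : \sum_i c 0 i = 0.
  transitivity ((c *m A) 0 (rshift n ord0)); last by rewrite cA mxE.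
  by rewrite mxE; apply: eq_bigr => i _; rewrite !mxE sr mulr1.
exists (fun i => c 0 i); split=> //.
  apply/rowP => j; rewrite summxE [RHS]mxE.
  transitivity ((c *m A) 0 (lshift 1 j)); last by rewrite cA mxE.
  by rewrite mxE; apply: eq_bigr => i _; rewrite !mxE sl.
apply: contrapT => no_pos; apply/negP: c_neq0; apply/negPn/eqP/rowP => i.
have c_le0 j : c 0 j <= 0 by rewrite leNgt; apply/negP => cj; apply: no_pos; exists j.
have : \sum_j (- c 0 j) == 0 by rewrite sumrN c_sum oppr0.
rewrite psumr_eq0 => [/allP c_eq0|j _]; last by rewrite oppr_ge0.
by have := c_eq0 i (mem_index_enum i); rewrite mxE oppr_eq0 => /eqP.
Qed.

(* Caratheodory: along an affine dependence among the points one weight can be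
   driven to zero. *)
Lemma convex_comb_shrink S m : (n.+1 < m.+1)%N -> convex_comb S m.+1 `<=` convex_comb S m.
Proof.
move=> hm x [t [k [t0 t1 kS ->]]].
have [c [c_sum ck [ip c_ip]]] := affine_dependence k hm.
(* subtract the largest multiple of [c] keeping all weights nonnegative *)
have [j c_j jmin] := @arg_minP _ R _ ip (fun i => 0 < c i) (fun i => t i / c i) c_ip.
set tau := t j / c j.
pose t' i := t i - tau * c i.
have t'_ge0 i : 0 <= t' i.
  rewrite subr_ge0; case: (ltP 0 (c i)) => c_i.
    by have := jmin i c_i; rewrite ler_pdivlMr.
  by apply: le_trans (t0 i); rewrite mulr_ge0_le0 // divr_ge0 // ltW.
have t'_j : t' j = 0 by rewrite /t' /tau divfK ?subrr // gt_eqF.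
have t'_sum : \sum_i t' i = 1 by rewrite /t' sumrB -mulr_sumr c_sum mulr0 subr0.
have t'_comb : \sum_i t' i *: k i = \sum_i t i *: k i.
  rewrite /t'; under eq_bigr do rewrite scalerBl -scalerA.
  by rewrite sumrB -scaler_sumr ck scaler0 subr0.
exists (fun i => t' (lift j i)), (fun i => k (lift j i)); split=> //.
- by move: t'_sum; rewrite (bigD1_ord j) //= t'_j add0r.
- by rewrite -t'_comb (bigD1_ord j) //= t'_j scale0r add0r.
Qed.

Lemma convex_comb_caratheodory S m : convex_comb S m `<=` convex_comb S n.+1.
Proof.
elim: m => [|m IH]; first by rewrite convex_comb0.
have [/convex_comb_shrink shrink|] := ltnP n.+1 m.+1; last exact: convex_comb_mono.
by move=> x /shrink; exact: IH.
Qed.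

Lemma convhull_convex_comb S : convhull S = convex_comb S n.+1.
Proof.
apply/seteqP; split; last exact: convex_comb_sub_convhull.
apply: convhull_sub; last exact: sub_convex_comb.
by move=> x y t hx hy t01; exact: convex_comb_caratheodory (convex_comb_segment hx hy t01).
Qed.

Lemma compact_convhull S : compact S -> compact (convhull S).
Proof. by rewrite convhull_convex_comb; exact: compact_convex_comb. Qed.

End Caratheodory.

Section MinkowskiCombination.
Variables (R : realType) (n : nat).
Local Notation V := 'rV[R]_n.
Implicit Types (a b c p lambda nu : R) (M N : set V).

Lemma mcombP a b M N z :
  mcomb a b M N z <-> exists k l, [/\ M k, N l & z = a *: k + b *: l].
Proof.
split=> [[_ [k Mk <-] [_ [l Nl <-] <-]]|[k [l [Mk Nl ->]]]]; first by exists k, l.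
by exists (a *: k); [exists k | exists (b *: l); [exists l |]].
Qed.

Lemma dilate_mcomb c a b M N : dilate c (mcomb a b M N) = mcomb (c * a) (c * b) M N.
Proof.
apply/seteqP; split=> z.
  move=> [w /mcombP[k [l [Mk Nl ->]]] <-]; apply/mcombP; exists k, l.
  by rewrite scalerDr !scalerA.
move=> /mcombP[k [l [Mk Nl ->]]]; exists (a *: k + b *: l).
  by apply/mcombP; exists k, l.
by rewrite scalerDr !scalerA.
Qed.

Lemma dilate1 M : dilate 1 M = M.
Proof.
apply/seteqP; split=> z; first by move=> [w Mw <-]; rewrite scale1r.
by move=> Mz; exists z; rewrite ?scale1r.
Qed.

Lemma psum1_pscale lambda M N : 0 <= lambda <= 1 ->
  psum 1 (pscale 1 (1 - lambda) M) (pscale 1 lambda N) = mcomb (1 - lambda) lambda M N.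
Proof.
by move=> /andP[l0 l1]; rewrite /psum eqxx /pscale invr1 !powRr1 // subr_ge0.
Qed.

(* for [p != 1] the L_p combination is the union over [nu] of these Minkowski
   combinations *)
Lemma mcomb_sub_psum p lambda nu M N : p != 1 -> 0 <= nu <= 1 ->
  mcomb ((1 - nu) `^ (1 - p^-1) * (1 - lambda) `^ p^-1) (nu `^ (1 - p^-1) * lambda `^ p^-1) M N
  `<=` psum p (pscale p (1 - lambda) M) (pscale p lambda N).
Proof.
move=> p1 nu01 z /mcombP[k [l [Mk Nl ->]]]; rewrite /psum (negbTE p1).
exists ((1 - lambda) `^ p^-1 *: k), (lambda `^ p^-1 *: l), nu.
by split=> //; [exists k | exists l | rewrite !scalerA].
Qed.

End MinkowskiCombination.

Section SupportFunction.
Variables (R : realType) (n : nat).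
Local Notation V := 'rV[R]_n.
Implicit Types (S T : set V) (h : V -> R) (u w : V).

Definition supports S h :=
  forall u, (forall s, S s -> dot u s <= h u) /\ exists2 s, S s & dot u s = h u.

Lemma supports_exists S : S !=set0 -> compact S -> exists h, supports S h.
Proof.
move=> S0 cS.
have /choice[s smax] : forall u, exists s, S s /\ forall s', S s' -> dot u s' <= dot u s.
  move=> u; have [s] := EVT_max_rV S0 cS (continuous_subspaceT (@dot_continuous R n u)).
  by rewrite inE => Ss smax; exists s; split=> // s' Ss'; apply: smax; rewrite inE.
by exists (fun u => dot u (s u)) => u; have [Ss smax'] := smax u; split=> //; exists (s u).
Qed.

Lemma supports_mcomb a b K L hK hL : 0 <= a -> 0 <= b ->
  supports K hK -> supports L hL -> supports (mcomb a b K L) (fun u => a * hK u + b * hL u).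
Proof.
move=> a0 b0 sK sL u; have [Kmax [k Kk hk]] := sK u; have [Lmax [l Ll hl]] := sL u.
split; last by exists (a *: k + b *: l); [apply/mcombP; exists k, l | rewrite dotD !dotZ hk hl].
move=> _ /mcombP[k' [l' [Kk' Ll' ->]]]; rewrite dotD !dotZ.
by rewrite lerD ?ler_wpM2l //; [exact: Kmax | exact: Lmax].
Qed.

Lemma separation S w : compact S -> ~ convhull S w ->
  exists u, forall s, S s -> dot u s < dot u w.
Proof.
move=> cS nw; have [S0|S_empty] := pselect (S !=set0); last first.
  by exists 0 => s Ss; case: S_empty; exists s.
have D0 : convhull S !=set0 by case: S0 => s Ss; exists s; exact: subset_convhull.
pose dist2 x := dot (x - w) (x - w).
have dist2_cont : continuous dist2.
  apply: continuous_dot => x;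
    by apply: (continuousB (f := id) (g := cst w)); [exact: cvg_id | exact: cst_continuous].
have [z] := EVT_min_rV D0 (compact_convhull cS) (continuous_subspaceT dist2_cont).
rewrite inE => Dz zmin; set u := w - z.
have u_neq0 : u != 0 by rewrite subr_eq0; apply/eqP => wz; apply: nw; rewrite wz.
(* [z] is the point of the hull closest to [w], so [u] is normal to a supporting
   hyperplane at [z] *)
suff uz s : S s -> dot u s <= dot u z.
  exists u => s /uz us; apply: le_lt_trans us _.
  by rewrite -subr_gt0 -dotB dot_self_gt0.
move=> Ss; rewrite -subr_le0 -dotB leNgt; apply/negP => d_gt0.
set d := dot u (s - z) in d_gt0; set e := dot (s - z) (s - z).
have e0 : 0 <= e := dot_self_ge0 _.
set t := d / (e + d); have ed : 0 < e + d by rewrite ltr_wpDl.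
have t0 : 0 < t by rewrite divr_gt0.
have t1 : t <= 1 by rewrite ler_pdivrMr // mul1r lerDr.
have te : t * e <= d by rewrite /t mulrAC ler_pdivrMr //; nra.
have : dist2 z <= dist2 (t *: s + (1 - t) *: z).
  apply: zmin; rewrite inE; apply: convhull_segment => //; first exact: subset_convhull.
  by rewrite ltW.
rewrite /dist2 /=.
have -> : t *: s + (1 - t) *: z - w = (-1) *: u + t *: (s - z).
  by apply/rowP => i; rewrite /u !mxE; ring.
have -> : z - w = (-1) *: u by rewrite scaleN1r opprB.
rewrite dot_selfDZ !dotZl !dotZ -/d -/e.
have := mulr_gt0 t0 d_gt0; nra.
Qed.

Lemma convhull_supportsP S h : compact S -> supports S h ->
  forall w, convhull S w <-> forall u, dot u w <= h u.
Proof.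
move=> cS sS w; split=> [hw u|hw].
  have [Smax _] := sS u; apply: (convhull_sub _ Smax) hw => x y t /= hx hy /andP[t0 t1].
  rewrite dotD !dotZ; have := ler_wpM2l t0 hx; have : 0 <= 1 - t by rewrite subr_ge0.
  by move/ler_wpM2l/(_ _ _ hy); lra.
apply: contrapT => /(separation cS)[u sep]; have [_ [s Ss hs]] := sS u.
by have := sep s Ss; rewrite hs ltNge hw.
Qed.

Lemma convhull0_supports S h : compact S -> supports S h ->
  (forall u, 0 <= h u) -> convhull S 0.
Proof. by move=> cS sS h0; apply/(convhull_supportsP cS sS) => u; rewrite dot0. Qed.

Lemma convhull_dilate_supports S T hS hT r : compact S -> compact T ->
  supports S hS -> supports T hT -> 0 < r -> (forall u, hT u = r * hS u) ->
  convhull T = dilate r (convhull S).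
Proof.
move=> cS cT sS sT r0 hST; apply/seteqP; split=> [w|_ [v hv <-]].
  move/(convhull_supportsP cT sT) => hw; exists (r^-1 *: w).
    apply/(convhull_supportsP cS sS) => u.
    by rewrite dotZ ler_pdivrMl // -hST.
  by rewrite scalerA divff ?gt_eqF // scale1r.
apply/(convhull_supportsP cT sT) => u; rewrite dotZ hST ler_pM2l //.
exact: (convhull_supportsP cS sS v).1.
Qed.

End SupportFunction.

(** * The L_p Brunn-Minkowski inequality *)

Section Normalization.
Variable R : realType.
Implicit Types a b x y e : R.

Lemma normalized_weight_itv a b : 0 < a -> 0 < b -> 0 < b / (a + b) < 1.
Proof. by move=> a0 b0; rewrite divr_gt0 ?addr_gt0 //= ltr_pdivrMr ?addr_gt0 // mul1r ltrDr. Qed.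

Lemma powR_comb_normalize a b x y e : 0 < a + b -> 0 <= a * x + b * y ->
  (a * x + b * y) `^ e = (a + b) `^ e * ((1 - b / (a + b)) * x + b / (a + b) * y) `^ e.
Proof.
move=> ab0 comb0.
have -> : (1 - b / (a + b)) * x + b / (a + b) * y = (a * x + b * y) / (a + b).
  by field; rewrite gt_eqF.
by rewrite -powRM ?divr_ge0 ?(ltW ab0) // [X in _ = X `^ e]mulrC divfK // gt_eqF.
Qed.

End Normalization.

Lemma mcomb_normalize (R : realType) n (a b : R) (M N : set 'rV[R]_n) : a + b != 0 ->
  dilate (a + b)^-1 (mcomb a b M N) = mcomb (1 - b / (a + b)) (b / (a + b)) M N.
Proof. by move=> ab0; rewrite dilate_mcomb; congr mcomb; field. Qed.

Section Subhomogeneous.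
Variables (R : realType) (n : nat).
Variables (A : set (set 'rV[R]_n)) (F : set 'rV[R]_n -> R) (alpha : R).
Implicit Types (M : set 'rV[R]_n) (c : R).

Lemma subhomogeneous_shrink M c : subhomogeneous_on A F alpha -> A M -> 0 < c <= 1 ->
  c `^ alpha^-1 * F (dilate c^-1 M) <= F M.
Proof.
move=> Fsub AM /andP[c0 c1]; have := Fsub M c^-1 AM; rewrite invf_ge1 // => /(_ c1) h.
have e : c `^ alpha^-1 * c^-1 `^ alpha^-1 = 1.
  by rewrite -powRM ?invr_ge0 ?ltW // divff ?gt_eqF // powR1.
by rewrite -[F M]mul1r -e -mulrA ler_pM2l ?powR_gt0.
Qed.

Lemma strictly_subhomogeneous_shrink M c : strictly_subhomogeneous_on A F alpha ->
  A M -> 0 < F M -> 0 < c < 1 -> c `^ alpha^-1 * F (dilate c^-1 M) < F M.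
Proof.
move=> [_ Fsub] AM FM0 /andP[c0 c1].
have := Fsub M c^-1 AM FM0; rewrite invf_gt1 // => /(_ c1) h.
have e : c `^ alpha^-1 * c^-1 `^ alpha^-1 = 1.
  by rewrite -powRM ?invr_ge0 ?ltW // divff ?gt_eqF // powR1.
by rewrite -[F M]mul1r -e -mulrA ltr_pM2l ?powR_gt0.
Qed.

End Subhomogeneous.

Section LpBrunnMinkowski.
Variables (R : realType) (n : nat).
Local Notation V := 'rV[R]_n.
Variables (A : set (set V)) (F : set V -> R) (alpha C : R) (K L : set V).
Hypothesis A_mcomb :
  forall M N a b, A M -> A N -> 0 <= a -> 0 <= b -> A (mcomb a b M N).
Hypothesis F_incr : increasing_on A F.
Hypothesis F_subhom : subhomogeneous_on A F alpha.
Hypotheses (AK : A K) (AL : A L) (FK_gt0 : 0 < F K) (FL_gt0 : 0 < F L) (C_gt0 : 0 < C).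
Hypothesis BM : forall lambda, 0 < lambda < 1 ->
  C * ((1 - lambda) * F K `^ alpha + lambda * F L `^ alpha) `^ alpha^-1
    <= F (mcomb (1 - lambda) lambda K L).

Local Notation x := (F K `^ alpha).
Local Notation y := (F L `^ alpha).
Local Notation BM_rhs p lambda := (C * ((1 - lambda) * F K `^ (p * alpha)
  + lambda * F L `^ (p * alpha)) `^ (p * alpha)^-1).
Local Notation Lp_comb p lambda := (psum p (pscale p (1 - lambda) K) (pscale p lambda L)).

Let x_gt0 : 0 < x. Proof. exact: powR_gt0. Qed.
Let y_gt0 : 0 < y. Proof. exact: powR_gt0. Qed.

Lemma F_mcomb_normalize a b : 0 < a -> 0 < b -> a + b <= 1 ->
  (a + b) `^ alpha^-1 * F (mcomb (1 - b / (a + b)) (b / (a + b)) K L)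
    <= F (mcomb a b K L).
Proof.
move=> a0 b0 ab1; have ab0 := addr_gt0 a0 b0.
rewrite -mcomb_normalize ?gt_eqF //; apply: (subhomogeneous_shrink F_subhom).
  by apply: A_mcomb; rewrite ?ltW.
by rewrite ab0.
Qed.

Lemma BM_mcomb a b : 0 < a -> 0 < b ->
  C * (a * x + b * y) `^ alpha^-1
    <= (a + b) `^ alpha^-1 * F (mcomb (1 - b / (a + b)) (b / (a + b)) K L).
Proof.
move=> a0 b0; rewrite powR_comb_normalize ?addr_gt0 //; last first.
  by rewrite addr_ge0 // mulr_ge0 // ltW.
by rewrite mulrCA ler_pM2l ?powR_gt0 ?addr_gt0 // BM // normalized_weight_itv.
Qed.

Section Exponent.
Variables (p lambda : R).
Hypotheses (p_gt1 : 1 < p) (lambda01 : 0 < lambda < 1).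

(* [mu] makes Hoelder's inequality for the amplitudes [P], [Q] an equality, so that
   [a x + b y] is the p-mean [((1 - lambda) x^p + lambda y^p)^(1/p)] *)
Let P := (1 - lambda) `^ p^-1 * x.
Let Q := lambda `^ p^-1 * y.
Let mu := pweight p P Q.
Let a := (1 - mu) `^ (1 - p^-1) * (1 - lambda) `^ p^-1.
Let b := mu `^ (1 - p^-1) * lambda `^ p^-1.

Let p_gt0 : 0 < p. Proof. exact: lt_trans ltr01 p_gt1. Qed.
Let lambda0 : 0 < lambda. Proof. by case/andP: lambda01. Qed.
Let lambda1 : 0 < 1 - lambda. Proof. by rewrite subr_gt0; case/andP: lambda01. Qed.
Let p_neq1 : p != 1. Proof. by rewrite gt_eqF. Qed.
Let weights_pow : ((1 - lambda) `^ p^-1) `^ p + (lambda `^ p^-1) `^ p = 1.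
Proof.
have p_neq0 := lt0r_neq0 p_gt0.
by rewrite (powRVK (ltW lambda1) p_neq0) (powRVK (ltW lambda0) p_neq0) subrK.
Qed.

Let mu01 : 0 < mu < 1.
Proof. by apply: pweight_itv; apply: mulr_gt0 => //; apply: powR_gt0. Qed.

Lemma ab_gt0 : 0 < a /\ 0 < b.
Proof.
have [mu0 mu1] := andP mu01; have mu1' : 0 < 1 - mu by rewrite subr_gt0.
by split; apply: mulr_gt0; apply: powR_gt0.
Qed.

Lemma ab_pcomb : a + b = pcomb p ((1 - lambda) `^ p^-1) (lambda `^ p^-1) mu.
Proof. by []. Qed.

Lemma ab_le1 : a + b <= 1.
Proof.
have [mu0 mu1] := andP mu01.
rewrite ab_pcomb; apply: le_trans (pcomb_le _ _ _ _) _ => //.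
- exact: powR_gt0.
- exact: powR_gt0.
- by rewrite (ltW mu0) (ltW mu1).
by rewrite weights_pow powR1.
Qed.

Lemma BM_rhs_mcomb : BM_rhs p lambda = C * (a * x + b * y) `^ alpha^-1.
Proof.
have -> : a * x + b * y = pcomb p P Q mu by rewrite /pcomb -!mulrA.
rewrite pcomb_pweight ?mulr_gt0 ?powR_gt0 // /P /Q !powRM ?powR_ge0 ?ltW //.
have p_neq0 := lt0r_neq0 p_gt0.
rewrite (powRVK (ltW lambda1) p_neq0) (powRVK (ltW lambda0) p_neq0).
by rewrite -!powRrM [alpha * p]mulrC invfM.
Qed.

Lemma mcomb_sub_Lp_comb : mcomb a b K L `<=` Lp_comb p lambda.
Proof. by apply: mcomb_sub_psum; rewrite ?gt_eqF //; case/andP: mu01 => *; rewrite !ltW. Qed.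

Lemma BM_Lp_comb_gt1 : A (Lp_comb p lambda) -> BM_rhs p lambda <= F (Lp_comb p lambda).
Proof.
move=> A_Lp; have [a0 b0] := ab_gt0; rewrite BM_rhs_mcomb.
apply: le_trans (BM_mcomb a0 b0) _; apply: le_trans (F_mcomb_normalize a0 b0 ab_le1) _.
by apply: F_incr mcomb_sub_Lp_comb => //; apply: A_mcomb; rewrite ?ltW.
Qed.

Section Equality.
Hypothesis A_Lp : A (Lp_comb p lambda).
Hypothesis BM_eq : F (Lp_comb p lambda) = BM_rhs p lambda.

Let t := b / (a + b).

Lemma BM_eq_chain :
  [/\ F (mcomb (1 - t) t K L) = C * ((1 - t) * x + t * y) `^ alpha^-1,
      (a + b) `^ alpha^-1 * F (mcomb (1 - t) t K L) = F (mcomb a b K L)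
    & F (mcomb a b K L) = F (Lp_comb p lambda)].
Proof.
have [a0 b0] := ab_gt0; have c0 : 0 < (a + b) `^ alpha^-1 by rewrite powR_gt0 ?addr_gt0.
have h1 : (a + b) `^ alpha^-1 * (C * ((1 - t) * x + t * y) `^ alpha^-1)
    <= (a + b) `^ alpha^-1 * F (mcomb (1 - t) t K L).
  by rewrite ler_pM2l // BM // normalized_weight_itv.
have h2 := F_mcomb_normalize a0 b0 ab_le1.
have h3 : F (mcomb a b K L) <= F (Lp_comb p lambda).
  by apply: F_incr mcomb_sub_Lp_comb => //; apply: A_mcomb; rewrite ?ltW.
have e : F (Lp_comb p lambda) = (a + b) `^ alpha^-1 * (C * ((1 - t) * x + t * y) `^ alpha^-1).
  have axby0 : 0 <= a * x + b * y by rewrite addr_ge0 // mulr_ge0 // ltW.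
  by rewrite BM_eq BM_rhs_mcomb (powR_comb_normalize _ (addr_gt0 a0 b0) axby0) mulrCA.
set X := C * _ in h1 e *; set Y := F (mcomb (1 - t) t K L) in h1 h2 *.
set Z := F (mcomb a b K L) in h2 h3 *; set W := F (Lp_comb p lambda) in h3 e *.
have cYZ : (a + b) `^ alpha^-1 * Y = Z by apply/le_anti; rewrite h2 (le_trans h3) // e.
have ZW : Z = W by apply/le_anti; rewrite h3 e (le_trans h1) // cYZ.
split; [apply: (mulfI (lt0r_neq0 c0)) | exact: cYZ | exact: ZW].
by rewrite cYZ ZW e.
Qed.

Lemma BM_eq_normalized : exists lambdab, 0 < lambdab < 1 /\
  F (mcomb (1 - lambdab) lambdab K L) = C * ((1 - lambdab) * x + lambdab * y) `^ alpha^-1.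
Proof.
have [a0 b0] := ab_gt0; exists t; split; first exact: normalized_weight_itv.
by case: BM_eq_chain.
Qed.

Lemma Lp_comb_eq_mcomb : strictly_increasing_on A F -> Lp_comb p lambda = mcomb a b K L.
Proof.
move=> F_sincr; apply/eqP/contraT => neq; have [a0 b0] := ab_gt0.
have AM : A (mcomb a b K L) by apply: A_mcomb; rewrite ?ltW.
have := F_sincr _ _ AM A_Lp mcomb_sub_Lp_comb; rewrite eq_sym => /(_ neq).
by case: BM_eq_chain => _ _ ->; rewrite ltxx.
Qed.

Lemma supports_proportional hK hL : strictly_increasing_on A F ->
  supports K hK -> supports L hL -> forall u, 0 <= hK u /\ hK u * y = hL u * x.
Proof.
move=> F_sincr sK sL u; have [a0 b0] := ab_gt0.
have [cK cL] : 0 < (1 - lambda) `^ p^-1 /\ 0 < lambda `^ p^-1 by split; apply: powR_gt0.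
set PK := (1 - lambda) `^ p^-1 * hK u; set QL := lambda `^ p^-1 * hL u.
(* every point of the L_p combination lies in [a K + b L], so [mu] maximizes the
   support value in direction [u] *)
have mu_max nu : 0 <= nu <= 1 -> pcomb p PK QL nu <= pcomb p PK QL mu.
  move=> nu01.
  have a'0 : 0 <= (1 - nu) `^ (1 - p^-1) * (1 - lambda) `^ p^-1 by rewrite mulr_ge0 ?powR_ge0.
  have b'0 : 0 <= nu `^ (1 - p^-1) * lambda `^ p^-1 by rewrite mulr_ge0 ?powR_ge0.
  have [_ [z Mz hz]] := supports_mcomb a'0 b'0 sK sL u.
  have := (supports_mcomb (ltW a0) (ltW b0) sK sL u).1 z.
  rewrite -Lp_comb_eq_mcomb // => /(_ (mcomb_sub_psum p_neq1 nu01 Mz)).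
  by rewrite /pcomb /PK /QL !mulrA -hz.
have [[/eqP PK0 /eqP QL0]|[PK0 QL0 mu_eq]] := pcomb_argmax p_gt1 mu01 mu_max.
  move: PK0 QL0; rewrite !mulf_eq0 !(gt_eqF cK) !(gt_eqF cL) /= => /eqP-> /eqP->.
  by rewrite !mul0r lexx.
split; first by move: PK0; rewrite pmulr_rgt0 // => /ltW.
have := pweight_inj p_gt0 (mulr_gt0 cK x_gt0) (mulr_gt0 cL y_gt0) PK0 QL0 mu_eq.
move=> e; apply: (mulfI (lt0r_neq0 (mulr_gt0 cK cL))).
rewrite [LHS](_ : _ = lambda `^ p^-1 * y * PK); last by rewrite /PK; ring.
by rewrite -e /QL; ring.
Qed.

Lemma ab_eq1 : strictly_subhomogeneous_on A F alpha -> a + b = 1.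
Proof.
move=> F_ssub; apply/eqP; rewrite eq_le ab_le1 /= leNgt; apply/negP => ab_lt1.
have [a0 b0] := ab_gt0; have ab0 := addr_gt0 a0 b0.
have AM : A (mcomb a b K L) by apply: A_mcomb; rewrite ?ltW.
have FM0 : 0 < F (mcomb a b K L).
  case: BM_eq_chain => _ _ ->; rewrite BM_eq BM_rhs_mcomb mulr_gt0 // powR_gt0 //.
  by rewrite addr_gt0 // mulr_gt0.
have := strictly_subhomogeneous_shrink F_ssub AM FM0 (introT andP (conj ab0 ab_lt1)).
by rewrite mcomb_normalize ?gt_eqF //; case: BM_eq_chain => _ -> _; rewrite ltxx.
Qed.

Lemma x_eq_y : a + b = 1 -> x = y.
Proof.
move=> ab1; have [cK cL] : 0 < (1 - lambda) `^ p^-1 /\ 0 < lambda `^ p^-1.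
  by split; apply: powR_gt0.
have [mu0 mu1] := andP mu01.
have mu_eq : mu = pweight p ((1 - lambda) `^ p^-1) (lambda `^ p^-1).
  apply/eqP/contraT => /(pcomb_lt p_gt1 cK cL (introT andP (conj (ltW mu0) (ltW mu1)))).
  by rewrite -ab_pcomb ab1 weights_pow powR1 ltxx.
have := pweight_inj p_gt0 (mulr_gt0 cK x_gt0) (mulr_gt0 cL y_gt0) cK cL mu_eq.
move=> e; apply: (mulfI (lt0r_neq0 (mulr_gt0 cK cL))).
rewrite [LHS](_ : _ = (1 - lambda) `^ p^-1 * x * lambda `^ p^-1); last by ring.
by rewrite e; ring.
Qed.

Hypotheses (K0 : K !=set0) (L0 : L !=set0).

Lemma BM_Lp_comb_equality :
  (exists lambdab, 0 < lambdab < 1 /\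
     F (mcomb (1 - lambdab) lambdab K L) =
     C * ((1 - lambdab) * x + lambdab * y) `^ alpha^-1) /\
  (strictly_increasing_on A F -> compact K -> compact L ->
     [/\ convhull K 0, convhull L 0,
         (exists c, 0 <= c /\ convhull K = dilate c (convhull L)),
         (exists c, 0 <= c /\ convhull L = dilate c (convhull K)) &
         (strictly_subhomogeneous_on A F alpha -> convhull K = convhull L)]).
Proof.
split=> [|F_sincr cK cL]; first exact: BM_eq_normalized.
have [hK sK] := supports_exists K0 cK; have [hL sL] := supports_exists L0 cL.
have prop := supports_proportional F_sincr sK sL.
have hL_ge0 u : 0 <= hL u.
  have [hK0 e] := prop u; have := mulr_ge0 hK0 (ltW y_gt0).
  by rewrite e pmulr_lge0.
have dilK : convhull K = dilate (x / y) (convhull L).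
  apply: convhull_dilate_supports cL cK sL sK (divr_gt0 x_gt0 y_gt0) _ => u.
  have [_ e] := prop u; apply: (mulIf (lt0r_neq0 y_gt0)); rewrite e.
  by field; exact: lt0r_neq0.
have dilL : convhull L = dilate (y / x) (convhull K).
  apply: convhull_dilate_supports cK cL sK sL (divr_gt0 y_gt0 x_gt0) _ => u.
  have [_ e] := prop u; apply: (mulIf (lt0r_neq0 x_gt0)); rewrite -e.
  by field; exact: lt0r_neq0.
split.
- by apply: convhull0_supports cK sK _ => u; case: (prop u).
- exact: convhull0_supports cL sL hL_ge0.
- by exists (x / y); rewrite divr_ge0 ?ltW.
- by exists (y / x); rewrite divr_ge0 ?ltW.
- by move=> F_ssub; rewrite dilK (x_eq_y (ab_eq1 F_ssub)) divff ?dilate1 // lt0r_neq0.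
Qed.

End Equality.

End Exponent.

Lemma BM_Lp_comb p lambda : 1 <= p -> 0 < lambda < 1 ->
  A (Lp_comb p lambda) -> BM_rhs p lambda <= F (Lp_comb p lambda).
Proof.
rewrite le_eqVlt => /predU1P[<- l01 _|p_gt1 l01]; last exact: BM_Lp_comb_gt1.
have [l0 l1] := andP l01.
by rewrite psum1_pscale ?(ltW l0) ?(ltW l1) // !mul1r; exact: BM.
Qed.

End LpBrunnMinkowski.

Theorem mainTheorem3 (R : realType) (n : nat)
  (A : set (set 'rV[R]_n)) (F : set 'rV[R]_n -> R) (alpha C : R)
  (K L : set 'rV[R]_n) :
  (forall M, A M -> M !=set0) ->
  (forall M N a b, A M -> A N -> 0 <= a -> 0 <= b -> A (mcomb a b M N)) ->
  (forall M, A M -> 0 <= F M) ->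
  increasing_on A F ->
  0 < alpha ->
  subhomogeneous_on A F alpha ->
  A K -> A L -> 0 < F K * F L ->
  0 < C ->
  (forall lambda, 0 < lambda < 1 ->
     F (mcomb (1 - lambda) lambda K L) >=
     C * ((1 - lambda) * F K `^ alpha + lambda * F L `^ alpha) `^ alpha^-1) ->
  (forall p lambda, 1 <= p -> 0 < lambda < 1 ->
     A (psum p (pscale p (1 - lambda) K) (pscale p lambda L)) ->
     F (psum p (pscale p (1 - lambda) K) (pscale p lambda L)) >=
     C * ((1 - lambda) * F K `^ (p * alpha) + lambda * F L `^ (p * alpha))
           `^ (p * alpha)^-1)
  /\
  (forall p lambda, 1 < p -> 0 < lambda < 1 ->
     A (psum p (pscale p (1 - lambda) K) (pscale p lambda L)) ->
     F (psum p (pscale p (1 - lambda) K) (pscale p lambda L)) =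
     C * ((1 - lambda) * F K `^ (p * alpha) + lambda * F L `^ (p * alpha))
           `^ (p * alpha)^-1 ->
     (exists lambdab, 0 < lambdab < 1 /\
        F (mcomb (1 - lambdab) lambdab K L) =
        C * ((1 - lambdab) * F K `^ alpha + lambdab * F L `^ alpha) `^ alpha^-1)
     /\
     (strictly_increasing_on A F -> compact K -> compact L ->
        [/\ convhull K 0, convhull L 0,
            (exists a, 0 <= a /\ convhull K = dilate a (convhull L)),
            (exists b, 0 <= b /\ convhull L = dilate b (convhull K)) &
            (strictly_subhomogeneous_on A F alpha -> convhull K = convhull L)])).
Proof.
move=> A_ne A_mcomb F_ge0 F_incr _ F_subhom AK AL FKL_gt0 C_gt0 BM.
have F_gt0 M : A M -> F M != 0 -> 0 < F M by move=> AM; rewrite lt_def F_ge0 ?andbT.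
have FK_gt0 : 0 < F K.
  by apply: F_gt0 => //; apply: contraTneq FKL_gt0 => ->; rewrite mul0r ltxx.
have FL_gt0 : 0 < F L.
  by apply: F_gt0 => //; apply: contraTneq FKL_gt0 => ->; rewrite mulr0 ltxx.
split=> [p lambda p_ge1 lambda01 A_Lp|p lambda p_gt1 lambda01 A_Lp BM_eq].
  exact: (BM_Lp_comb A_mcomb F_incr F_subhom AK AL FK_gt0 FL_gt0 BM).
exact: (BM_Lp_comb_equality A_mcomb F_incr F_subhom AK AL FK_gt0 FL_gt0 C_gt0 BM
  p_gt1 lambda01 A_Lp BM_eq (A_ne K AK) (A_ne L AL)).
Qed.
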